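(* Let $G$ be a graph with a vertex $r$ that belongs to every minimum vertex cover of $G$ (so $\mathrm{OPT}(G-r)+1=\mathrm{OPT}(G)$), and let $Y$ be a minimal blocking set of $G$. Then $Y$ is also a minimal blocking set of $G-r$.
   Context: $\mathrm{OPT}(G)$ is the minimum vertex cover size; minimum vertex covers have size $\mathrm{OPT}(G)$. $Y\subseteq V(G)$ is a blocking set if no minimum vertex cover contains $Y$; minimal if no proper subset is a blocking set. *)

(* A graph G is given by a vertex set V : {set T} over a
   finite type T together with a symmetric irreflexive edge relation e : rel T;
   the edges of G are the pairs x,y of V with e x y.  G - r is (V :\ r, e). *)
From mathcomp Require Import all_boot.
Set Implicit Arguments. Unset Strict Implicit. Unset Printing Implicit Defensive.

Definition vertex_cover {T : finType} (V : {set T}) (e : rel T) (C : {set T}) : bool :=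
  (C \subset V) && [forall x in V, forall y in V, e x y ==> (x \in C) || (y \in C)].

(* OPT(G): minimum size of a vertex cover; #|V| is a valid default since
   V itself is always a vertex cover *)
Definition OPT {T : finType} (V : {set T}) (e : rel T) : nat :=
  \big[minn/#|V|]_(C in powerset V | vertex_cover V e C) #|C|.

Definition min_vertex_cover {T : finType} (V : {set T}) (e : rel T) (C : {set T}) : bool :=
  vertex_cover V e C && (#|C| == OPT V e).

Definition blocking {T : finType} (V : {set T}) (e : rel T) (Y : {set T}) : bool :=
  (Y \subset V) && [forall C : {set T}, min_vertex_cover V e C ==> ~~ (Y \subset C)].

Definition minimal_blocking {T : finType} (V : {set T}) (e : rel T) (Y : {set T}) : bool :=
  blocking V e Y && [forall Z : {set T}, (Z \proper Y) ==> ~~ blocking V e Z].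

(* Deleting a vertex r that lies in every minimum vertex cover gives a
   bijection C |-> C :\ r between the minimum vertex covers of G and those of
   G - r, with inverse D |-> r |: D, and OPT drops by exactly one.  A minimal
   blocking set Y avoids r: otherwise Y :\ r would already be blocking, since
   every minimum cover containing Y :\ r also contains r.  For sets avoiding r,
   containment in C and in C :\ r coincide, so being (minimally) blocking is
   the same in G and in G - r. *)
From HB Require Import structures.
From mathcomp Require Import all_boot.
Set Implicit Arguments. Unset Strict Implicit. Unset Printing Implicit Defensive.

HB.instance Definition _ := SemiGroup.isComLaw.Build nat minn minnA minnC.

Lemma geq_bigminn_cond (I : finType) (P : pred I) (F : I -> nat) x0 i :
  P i -> \big[minn/x0]_(j | P j) F j <= F i.
Proof. by move=> Pi; rewrite (bigD1 i) //= geq_minl. Qed.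

Section VertexCover.

Variables (T : finType) (e : rel T).
Implicit Types (V C D Y Z : {set T}) (r : T).

Lemma vertex_cover_setT V : vertex_cover V e V.
Proof.
rewrite /vertex_cover subxx; apply/forall_inP => x xV.
by apply/forall_inP => y _; rewrite xV implybT.
Qed.

Lemma OPT_min V C : vertex_cover V e C -> OPT V e <= #|C|.
Proof.
move=> coverC; apply: geq_bigminn_cond; rewrite coverC andbT powersetE.
by case/andP: coverC.
Qed.

Lemma exists_min_vertex_cover V : exists C, min_vertex_cover V e C.
Proof.
rewrite /min_vertex_cover /OPT.
apply: (big_ind (fun n => exists C, vertex_cover V e C && (#|C| == n))).
- by exists V; rewrite vertex_cover_setT eqxx.
- by move=> m n [Cm hm] [Cn hn]; rewrite /minn; case: ifP => _; [exists Cm | exists Cn].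
- by move=> C /andP[_ coverC]; exists C; rewrite coverC eqxx.
Qed.

Lemma vertex_coverD1 V C r :
  vertex_cover V e C -> vertex_cover (V :\ r) e (C :\ r).
Proof.
case/andP=> sCV /forall_inP cover; rewrite /vertex_cover setSD //=.
apply/forall_inP => x /setD1P[xr xV]; apply/forall_inP => y /setD1P[yr yV].
apply/implyP => exy; move/forall_inP/(_ y yV)/implyP/(_ exy): (cover x xV).
by rewrite !in_setD1 xr yr.
Qed.

Lemma vertex_coverU1 V D r :
  r \in V -> vertex_cover (V :\ r) e D -> vertex_cover V e (r |: D).
Proof.
move=> rV /andP[sDV /forall_inP cover]; apply/andP; split.
  by rewrite subUset sub1set rV (subset_trans sDV (subD1set V r)).
apply/forall_inP => x xV; apply/forall_inP => y yV; apply/implyP => exy.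
rewrite !in_setU1; have [//|xr] := eqVneq x r.
have [->|yr] := eqVneq y r; first by rewrite orbT.
have xVr : x \in V :\ r by rewrite in_setD1 xr.
have yVr : y \in V :\ r by rewrite in_setD1 yr.
by move/forall_inP/(_ y yVr)/implyP/(_ exy): (cover x xVr).
Qed.

Lemma notin_vertex_coverD1 V D r : vertex_cover (V :\ r) e D -> r \notin D.
Proof. by case/andP=> sDV _; apply/negP => /(subsetP sDV); rewrite setD11. Qed.

Lemma blockingP V Y :
  reflect (Y \subset V /\ forall C, min_vertex_cover V e C -> ~~ (Y \subset C))
          (blocking V e Y).
Proof.
apply: (iffP andP) => -[sYV block]; split=> //.
  by move=> C; apply/implyP; move/forallP: block.
by apply/forallP => C; apply/implyP/block.
Qed.

Section EssentialVertex.

Variables (V : {set T}) (r : T).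
Hypotheses (rV : r \in V)
  (r_in_min : forall C, min_vertex_cover V e C -> r \in C).

Lemma OPT_setD1 : OPT V e = (OPT (V :\ r) e).+1.
Proof.
have [C minC] := exists_min_vertex_cover V.
have [D /andP[coverD /eqP cardD]] := exists_min_vertex_cover (V :\ r).
have rC := r_in_min minC; case/andP: minC => coverC /eqP cardC.
have le_OPT_r := OPT_min (vertex_coverD1 r coverC).
have le_OPT := OPT_min (vertex_coverU1 rV coverD).
rewrite cardsU1 (notin_vertex_coverD1 coverD) cardD in le_OPT.
rewrite (cardsD1 r C) rC in cardC.
by apply/eqP; rewrite eqn_leq le_OPT -cardC add1n ltnS.
Qed.

Lemma min_vertex_coverD1 C :
  min_vertex_cover V e C -> min_vertex_cover (V :\ r) e (C :\ r).
Proof.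
move=> minC; have rC := r_in_min minC; case/andP: minC => coverC /eqP cardC.
rewrite /min_vertex_cover vertex_coverD1 //=.
by move: cardC; rewrite (cardsD1 r C) rC OPT_setD1 add1n => -[->].
Qed.

Lemma min_vertex_coverU1 D :
  min_vertex_cover (V :\ r) e D -> min_vertex_cover V e (r |: D).
Proof.
case/andP=> coverD /eqP cardD.
by rewrite /min_vertex_cover vertex_coverU1 //= cardsU1
  (notin_vertex_coverD1 coverD) cardD OPT_setD1.
Qed.

Lemma blocking_setD1 Y : blocking V e Y -> blocking V e (Y :\ r).
Proof.
case/blockingP=> sYV block; apply/blockingP; split.
  exact: subset_trans (subD1set Y r) sYV.
move=> C minC; apply: contra (block C minC) => sYrC.
apply/subsetP => x xY; have [->|xr] := eqVneq x r; first exact: r_in_min.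
by apply: (subsetP sYrC); rewrite in_setD1 xr.
Qed.

Lemma blocking_setD1_id Y :
  r \notin Y -> blocking (V :\ r) e Y = blocking V e Y.
Proof.
move=> rY; have sub_D1 C : (Y \subset C :\ r) = (Y \subset C).
  by rewrite subsetD1 rY andbT.
have sub_V : (Y \subset V :\ r) = (Y \subset V) by apply: sub_D1.
apply/blockingP/blockingP; rewrite sub_V => -[sYV block]; split=> // C minC.
  by rewrite -sub_D1; apply: block; apply: min_vertex_coverD1.
apply: contra (block _ (min_vertex_coverU1 minC)) => sYD.
exact: subset_trans sYD (subsetUr _ _).
Qed.

Lemma notin_minimal_blocking Y : minimal_blocking V e Y -> r \notin Y.
Proof.
case/andP=> blockY /forallP minY; apply/negP => rY.
move/implyP: (minY (Y :\ r)); rewrite properD1 // => /(_ isT)/negP; apply.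
exact: blocking_setD1 blockY.
Qed.

Lemma minimal_blocking_setD1_id Y :
  r \notin Y -> minimal_blocking (V :\ r) e Y = minimal_blocking V e Y.
Proof.
move=> rY; rewrite /minimal_blocking blocking_setD1_id //; congr (_ && _).
apply: eq_forallb => Z; apply: implyb_id2l => /proper_sub sZY.
by rewrite blocking_setD1_id //; apply: contra rY; apply: (subsetP sZY).
Qed.

End EssentialVertex.

End VertexCover.

Theorem mainTheorem19 (T : finType) (V : {set T}) (e : rel T)
  (e_sym : symmetric e) (e_irr : irreflexive e) (r : T) (rV : r \in V)
  (r_in_all : forall C : {set T}, min_vertex_cover V e C -> r \in C)
  (Y : {set T}) (hY : minimal_blocking V e Y) :
  minimal_blocking (V :\ r) e Y.
Proof.
have rY : r \notin Y := notin_minimal_blocking r_in_all hY.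
by rewrite (minimal_blocking_setD1_id rV r_in_all rY).
Qed.
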